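(* Fix an agent $k$ and coefficients $W_{i,j}\in[-1,1]$, $i,j\in[m_k]$, and suppose there are $\varepsilon',\varepsilon''\ge0$ such that $W_{i,i}\ge\max\{W_{i,j}-\varepsilon',-\varepsilon''\}$ for all $i,j\in[m_k]$. Let $(q^*_{i,j})_{i,j\in[m_k]}$ be an optimal solution of the program $(P^3)$ with these coefficients. Then for all $i,j\in[m_k]$: if $q^*_{i,j}>0$ then $W_{i,j}\ge W_{i,i}-m\varepsilon'-\sqrt2\,m\gamma$.
   Context: Agent $k$ has a finite type support $\{t_k^{(1)},\dots,t_k^{(m_k)}\}$ with probabilities $F_i>0$ summing to 1; $m=\max_{k'}m_{k'}$ (so $m\ge m_k$). With $\gamma>0$ and $\phi(\mathbf{q})=\frac12\gamma\|\mathbf{q}\|_2^2$, program $(P^3)$: maximize $\sum_i F_i(\sum_j W_{i,j}q_{i,j}-\phi(\mathbf{q}_i))$ subject to $\sum_j q_{i,j}=1$ for all $i$, $\sum_iF_iq_{i,j}=F_j$ for all $j$, $q_{i,j}\ge0$, where $\mathbf{q}_i=(q_{i,j})_j$. *)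

From HB Require Import structures.
From mathcomp Require Import all_boot all_order all_algebra.
From mathcomp Require Import reals.
Set Implicit Arguments. Unset Strict Implicit. Unset Printing Implicit Defensive.
Import Order.TTheory GRing.Theory Num.Theory.
Local Open Scope ring_scope.

Definition phi (R : realType) (n : nat) (gamma : R) (qi : 'I_n -> R) : R :=
  2^-1 * gamma * \sum_(j < n) (qi j) ^+ 2.

Definition P3_obj (R : realType) (n : nat) (gamma : R) (F : 'I_n -> R)
    (W q : 'I_n -> 'I_n -> R) : R :=
  \sum_(i < n) F i * (\sum_(j < n) W i j * q i j - phi gamma (q i)).

Definition P3_feasible (R : realType) (n : nat) (F : 'I_n -> R)
    (q : 'I_n -> 'I_n -> R) : Prop :=
  (forall i, \sum_(j < n) q i j = 1) /\
  (forall j, \sum_(i < n) F i * q i j = F j) /\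
  (forall i j, 0 <= q i j).

Definition P3_optimal (R : realType) (n : nat) (gamma : R) (F : 'I_n -> R)
    (W q : 'I_n -> 'I_n -> R) : Prop :=
  P3_feasible F q /\
  forall q', P3_feasible F q' -> P3_obj gamma F W q' <= P3_obj gamma F W q.

From HB Require Import structures.
From mathcomp Require Import all_boot all_order all_algebra.
From mathcomp Require Import reals.
From mathcomp Require Import ring lra.
Set Implicit Arguments.
Unset Strict Implicit.
Unset Printing Implicit Defensive.
Import Order.TTheory GRing.Theory Num.Theory.
Local Open Scope ring_scope.

(* If q_ij > 0, flow conservation (the F-weighted column constraints) forces a
   path of positive entries from j back to i, so (i, j) lies on a cycle of at
   most m_k positive entries.  Moving mass, along every edge (a, b) of this
   cycle, from q_ab to the diagonal entry q_aa keeps q feasible for small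
   steps, so by optimality the directional derivative of the objective is
   nonpositive: the reduced gaps (W_aa - gamma q_aa) - (W_ab - gamma q_ab)
   sum to at most 0 over the cycle.  Every gap is at least -(eps' + gamma)
   and q_ii <= 1, whence W_ii - W_ij <= (m_k - 1) eps' + m_k gamma. *)

Section EdgeShift.
Variables (R : comPzRingType) (n : nat).
Implicit Types (es : seq ('I_n * 'I_n)) (f : 'I_n -> R).

Lemma sum_indicator_mull (x : 'I_n) f : \sum_(a < n) (a == x)%:R * f a = f x.
Proof.
rewrite (bigD1 x) //= eqxx mul1r big1 ?addr0 // => a /negbTE ->.
by rewrite mul0r.
Qed.

Lemma sum_indicator (x : 'I_n) : \sum_(a < n) (a == x)%:R = 1 :> R.
Proof.
rewrite -[RHS](sum_indicator_mull x (fun _ => 1)).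
by apply: eq_bigr => a _; rewrite mulr1.
Qed.

(* For each edge (a, b) of es, one unit of mass moves from entry (a, b) to
   entry (a, a). *)
Definition edge_shift es (a b : 'I_n) : R :=
  \sum_(e <- es) (a == e.1)%:R * ((b == e.1)%:R - (b == e.2)%:R).

Definition balanced es := perm_eq [seq e.1 | e <- es] [seq e.2 | e <- es].

Lemma sum_edge_shift_row es a : \sum_(b < n) edge_shift es a b = 0.
Proof.
rewrite exchange_big big1 //= => e _.
by rewrite -mulr_sumr sumrB !sum_indicator subrr mulr0.
Qed.

Lemma sum_edge_shift_col es b :
  balanced es -> \sum_(a < n) edge_shift es a b = 0.
Proof.
move=> bal; rewrite exchange_big /=.
under eq_bigr do rewrite sum_indicator_mull.
rewrite sumrB -(big_map fst xpredT (fun x => (b == x)%:R)).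
by rewrite -(big_map snd xpredT (fun x => (b == x)%:R)) (perm_big _ bal) subrr.
Qed.

Lemma sum_edge_shift_pairing es (G : 'I_n -> 'I_n -> R) :
  \sum_(a < n) \sum_(b < n) G a b * edge_shift es a b =
  \sum_(e <- es) (G e.1 e.1 - G e.1 e.2).
Proof.
transitivity (\sum_(e <- es) \sum_(a < n) (a == e.1)%:R *
                \sum_(b < n) ((b == e.1)%:R * G a b - (b == e.2)%:R * G a b)).
  rewrite /edge_shift; under eq_bigr do under eq_bigr do rewrite mulr_sumr.
  under eq_bigr do rewrite exchange_big /=; rewrite exchange_big /=.
  apply: eq_bigr => e _; apply: eq_bigr => a _; rewrite mulr_sumr.
  by apply: eq_bigr => b _; ring.
by apply: eq_bigr => e _; rewrite sum_indicator_mull sumrB !sum_indicator_mull.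
Qed.

End EdgeShift.

Lemma edge_shift_lt0_mem (R : realDomainType) n (es : seq ('I_n * 'I_n)) a b :
  edge_shift R es a b < 0 -> (a, b) \in es.
Proof.
apply: contraTT => ab_notin; rewrite -leNgt.
rewrite /edge_shift big_seq sumr_ge0 // => e e_in.
have [a_e1 | _] := eqVneq a e.1; last by rewrite mul0r.
have /negbTE-> : b != e.2.
  by apply: contraNneq ab_notin => b_e2; rewrite a_e1 b_e2 -surjective_pairing.
by rewrite subr0 mul1r ler0n.
Qed.

Lemma le0_of_small_quadratic (R : realFieldType) (t0 L Q : R) :
  0 < t0 -> 0 <= Q -> (forall t, 0 < t <= t0 -> t * L - t ^+ 2 * Q <= 0) ->
  L <= 0.
Proof.
move=> t0_gt0 Q_ge0 small; rewrite leNgt; apply/negP => L_gt0.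
pose t := Num.min t0 (L / (Q + 1)).
have t_gt0 : 0 < t by rewrite lt_min t0_gt0 divr_gt0 // ltr_wpDl.
have t_le : t <= L / (Q + 1) by rewrite ge_min lexx orbT.
have : t * (L - t * Q) <= 0.
  by rewrite mulrBr mulrA -expr2 small // t_gt0 ge_min lexx.
rewrite pmulr_rle0 // subr_le0 => L_le.
have : t * (Q + 1) <= L by rewrite -ler_pdivlMr // ltr_wpDl.
nra.
Qed.

Lemma small_step_ge0 (R : realFieldType) (x y : R) :
  0 <= x -> (y < 0 -> 0 < x) ->
  exists2 t0, 0 < t0 & forall t, 0 < t <= t0 -> 0 <= x + t * y.
Proof.
move=> x_ge0 x_gt0; have [y_ge0 | y_lt0] := leP 0 y.
  by exists 1 => // t /andP[/ltW t_ge0 _]; rewrite addr_ge0 ?mulr_ge0.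
exists (x / - y) => [|t /andP[_ t_le]]; first by rewrite divr_gt0 ?oppr_gt0 ?x_gt0.
move: t_le; rewrite ler_pdivlMr ?oppr_gt0 // mulrN; lra.
Qed.

Lemma exists_uniform_step (R : realFieldType) (T : finType) (P : T -> R -> Prop) :
  (forall x, exists2 t0, 0 < t0 & forall t, 0 < t <= t0 -> P x t) ->
  exists2 t0, 0 < t0 & forall x t, 0 < t <= t0 -> P x t.
Proof.
move=> step.
suff [t0 t0_gt0 Pt0] : exists2 t0, 0 < t0 &
    forall x, x \in enum T -> forall t, 0 < t <= t0 -> P x t.
  by exists t0 => // x t; apply: Pt0; rewrite mem_enum.
elim: (enum T) => [|y s [t1 t1_gt0 IH]]; first by exists 1.
have [t2 t2_gt0 Pt2] := step y.
exists (Num.min t1 t2) => [|x]; first by rewrite lt_min t1_gt0.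
rewrite inE => /predU1P[-> | x_in] t /andP[t_gt0 t_le].
  by apply: Pt2; rewrite t_gt0 (le_trans t_le) // ge_min lexx orbT.
by apply: IH; rewrite // t_gt0 (le_trans t_le) // ge_min lexx.
Qed.

Section P3Perturbation.
Variables (R : realType) (n : nat) (gamma : R) (F : 'I_n -> R).
Variables (W q : 'I_n -> 'I_n -> R).
Hypothesis F_gt0 : forall a, 0 < F a.

(* The step t D acts on the flows F a * q a b rather than on q itself. *)
Definition perturb (t : R) (D : 'I_n -> 'I_n -> R) a b := q a b + t * D a b / F a.

Lemma P3_obj_perturb t D :
  P3_obj gamma F W (perturb t D) - P3_obj gamma F W q =
  t * (\sum_(a < n) \sum_(b < n) (W a b - gamma * q a b) * D a b)
  - t ^+ 2 * (2^-1 * gamma * \sum_(a < n) \sum_(b < n) D a b ^+ 2 / F a).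
Proof.
have F_neq0 a : F a != 0 by rewrite gt_eqF.
rewrite /P3_obj /phi -sumrB !mulr_sumr -sumrB; apply: eq_bigr => a _.
rewrite !mulr_sumr -!sumrB !mulr_sumr -!sumrB; apply: eq_bigr => b _.
by rewrite /perturb; field.
Qed.

Lemma P3_feasible_perturb t D :
  P3_feasible F q ->
  (forall a, \sum_(b < n) D a b = 0) -> (forall b, \sum_(a < n) D a b = 0) ->
  (forall a b, 0 <= perturb t D a b) -> P3_feasible F (perturb t D).
Proof.
move=> [q_row [q_col _]] D_row D_col perturb_ge0; split; [|split] => // [a|b].
  rewrite big_split /= q_row.
  under eq_bigr do rewrite mulrAC.
  by rewrite -mulr_sumr D_row mulr0 addr0.
have F_neq0 a : F a != 0 by rewrite gt_eqF.
under eq_bigr do rewrite mulrDr [F _ * (_ / _)]mulrC divfK //.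
by rewrite big_split /= q_col -mulr_sumr D_col mulr0 addr0.
Qed.

Lemma P3_optimal_first_order D :
  0 <= gamma -> P3_optimal gamma F W q ->
  (forall a, \sum_(b < n) D a b = 0) -> (forall b, \sum_(a < n) D a b = 0) ->
  (forall a b, D a b < 0 -> 0 < q a b) ->
  \sum_(a < n) \sum_(b < n) (W a b - gamma * q a b) * D a b <= 0.
Proof.
move=> gamma_ge0 [q_feas q_opt] D_row D_col D_lt0.
have [t0 t0_gt0 perturb_ge0] : exists2 t0, 0 < t0 &
    forall (ab : 'I_n * 'I_n) t, 0 < t <= t0 -> 0 <= perturb t D ab.1 ab.2.
  apply: exists_uniform_step => -[a b].
  have [_ [_ q_ge0]] := q_feas.
  have q_gt0 : D a b / F a < 0 -> 0 < q a b.
    by rewrite pmulr_llt0 ?invr_gt0 // => /D_lt0.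
  have [t0 t0_gt0 step] := small_step_ge0 (q_ge0 a b) q_gt0.
  by exists t0 => // t /step; rewrite /perturb mulrA.
pose Q := 2^-1 * gamma * \sum_(a < n) \sum_(b < n) D a b ^+ 2 / F a.
apply: (le0_of_small_quadratic (Q := Q) t0_gt0) => [|t t_range].
  rewrite !mulr_ge0 ?invr_ge0 ?sumr_ge0 // => a _.
  by rewrite sumr_ge0 // => b _; rewrite divr_ge0 ?sqr_ge0 ?ltW.
rewrite -P3_obj_perturb subr_le0 q_opt //.
by apply: P3_feasible_perturb => // a b; apply: (perturb_ge0 (a, b)).
Qed.

End P3Perturbation.

Lemma P3_optimal_cycle (R : realType) n (gamma : R) (F : 'I_n -> R)
    (W q : 'I_n -> 'I_n -> R) (es : seq ('I_n * 'I_n)) :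
  0 <= gamma -> (forall a, 0 < F a) -> P3_optimal gamma F W q ->
  balanced es -> (forall e, e \in es -> 0 < q e.1 e.2) ->
  \sum_(e <- es) ((W e.1 e.1 - gamma * q e.1 e.1) - (W e.1 e.2 - gamma * q e.1 e.2))
    <= 0.
Proof.
move=> gamma_ge0 F_gt0 q_opt es_bal es_gt0.
rewrite -(sum_edge_shift_pairing _ (fun a b => W a b - gamma * q a b)).
apply: P3_optimal_first_order => // [a | b | a b /edge_shift_lt0_mem ab_in].
- exact: sum_edge_shift_row.
- exact: sum_edge_shift_col.
- exact: es_gt0 ab_in.
Qed.

Lemma unzip1_pairmap_pair (T : Type) (x : T) (s : seq T) :
  unzip1 (pairmap pair x s) = belast x s.
Proof. by elim: s x => //= y s IH x; rewrite IH. Qed.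

Lemma unzip2_pairmap_pair (T : Type) (x : T) (s : seq T) :
  unzip2 (pairmap pair x s) = s.
Proof. by elim: s x => //= y s IH x; rewrite IH. Qed.

Lemma path_pairmap_pair (T : eqType) (r : rel T) (x : T) (s : seq T) :
  path r x s -> forall e, e \in pairmap pair x s -> r e.1 e.2.
Proof.
elim: s x => //= y s IH x /andP[rxy r_s] e; rewrite inE => /predU1P[-> //|].
exact: IH.
Qed.

Section P3Feasible.
Variables (R : realType) (n : nat) (F : 'I_n -> R) (q : 'I_n -> 'I_n -> R).
Hypotheses (F_gt0 : forall a, 0 < F a) (q_feas : P3_feasible F q).

Definition transfer : rel 'I_n := fun a b => 0 < q a b.

Lemma P3_feasible_le1 a b : q a b <= 1.
Proof.
have [q_row [_ q_ge0]] := q_feas.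
by rewrite -(q_row a) (bigD1 b) //= lerDl sumr_ge0.
Qed.

Lemma P3_feasible_no_inflow (S : {set 'I_n}) :
  (forall a b, a \in S -> b \notin S -> q a b = 0) ->
  forall a b, a \notin S -> b \in S -> q a b = 0.
Proof.
have [q_row [q_col q_ge0]] := q_feas.
move=> closed a b a_notin b_in.
have mass_out : \sum_(c in S) F c = \sum_(c in S) \sum_(d in S) F c * q c d.
  apply: eq_bigr => c c_in; rewrite -mulr_sumr -[LHS]mulr1 -(q_row c).
  rewrite (bigID (mem S)) /= [X in _ + X]big1 ?addr0 // => d d_notin.
  by rewrite closed.
have mass_in : \sum_(c in S) F c = \sum_(c in S) \sum_(d in S) F d * q d c
                                 + \sum_(c in S) \sum_(d | d \notin S) F d * q d c.
  rewrite -big_split /=; apply: eq_bigr => c _.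
  by rewrite -(q_col c) (bigID (mem S)).
have inflow0 : \sum_(c in S) \sum_(d | d \notin S) F d * q d c = 0.
  move: mass_in; rewrite mass_out exchange_big /=; lra.
have F_q_ge0 c d : 0 <= F d * q d c by exact: mulr_ge0 (ltW (F_gt0 d)) (q_ge0 d c).
have inflow_b0 : \sum_(d | d \notin S) F d * q d b = 0.
  by apply: (psumr_eq0P _ inflow0) => // c _; apply: sumr_ge0.
have /eqP : F a * q a b = 0 by apply: (psumr_eq0P _ inflow_b0).
by rewrite mulf_eq0 gt_eqF //= => /eqP.
Qed.

Lemma connect_transfer_rev i j : 0 < q i j -> connect transfer j i.
Proof.
move=> q_ij_gt0; apply/negPn/negP => not_ji.
pose S := [set c | connect transfer j c].
have S_closed a b : a \in S -> b \notin S -> q a b = 0.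
  rewrite !inE => ja not_jb; apply/eqP; rewrite eq_le.
  have [_ [_ ->]] := q_feas; rewrite andbT leNgt.
  by apply: contra not_jb => ab; apply: connect_trans ja (connect1 _).
have := P3_feasible_no_inflow S_closed (a := i) (b := j).
by rewrite !inE connect0 not_ji => /(_ isT isT) q_ij0; rewrite q_ij0 ltxx in q_ij_gt0.
Qed.

Lemma transfer_cycle i j : 0 < q i j ->
  exists r : seq ('I_n * 'I_n),
    [/\ balanced ((i, j) :: r), forall e, e \in (i, j) :: r -> 0 < q e.1 e.2
      & (size r < n)%N].
Proof.
move=> q_ij_gt0; have /connectP[p p_path p_last] := connect_transfer_rev q_ij_gt0.
case: (shortenP p_path) p_last => p' p'_path p'_uniq _ p'_last.
exists (pairmap pair j p'); split.
- rewrite /balanced /= -/(unzip1 _) -/(unzip2 _).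
  rewrite unzip1_pairmap_pair unzip2_pairmap_pair [j :: p']lastI -p'_last.
  by rewrite perm_sym perm_rcons.
- by move=> e; rewrite inE => /predU1P[-> //|]; apply: path_pairmap_pair p'_path e.
- by rewrite size_pairmap; have := max_card (mem (j :: p'));
    rewrite card_ord (card_uniqP p'_uniq).
Qed.

End P3Feasible.

Lemma P3_feasible_gap_ge (R : realType) n (gamma eps : R) (F : 'I_n -> R)
    (W q : 'I_n -> 'I_n -> R) a b :
  P3_feasible F q -> 0 <= gamma -> W a b - eps <= W a a ->
  - (eps + gamma) <= (W a a - gamma * q a a) - (W a b - gamma * q a b).
Proof.
move=> q_feas gamma_ge0 W_dom.
have q_aa_le1 := P3_feasible_le1 q_feas a a.
have [_ [_ q_ge0]] := q_feas; have := q_ge0 a b.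
nra.
Qed.

Lemma P3_optimal_diag_gap (R : realType) n (gamma eps : R) (F : 'I_n -> R)
    (W q : 'I_n -> 'I_n -> R) i j :
  (forall a, 0 < F a) -> 0 <= gamma -> 0 <= eps ->
  (forall a b, W a b - eps <= W a a) -> P3_optimal gamma F W q -> 0 < q i j ->
  W i i - W i j <= n.-1%:R * eps + n%:R * gamma.
Proof.
move=> F_gt0 gamma_ge0 eps_ge0 W_dom q_opt q_ij_gt0; have [q_feas _] := q_opt.
have [r [r_bal r_gt0 r_size]] := transfer_cycle F_gt0 q_feas q_ij_gt0.
have := P3_optimal_cycle gamma_ge0 F_gt0 q_opt r_bal r_gt0; rewrite big_cons /=.
have tail_ge : - (eps + gamma) * (size r)%:R <= \sum_(e <- r)
    ((W e.1 e.1 - gamma * q e.1 e.1) - (W e.1 e.2 - gamma * q e.1 e.2)).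
  rewrite mulr_natr -[leLHS]addr0 -iter_addr -(count_predT r) -big_const_seq.
  by apply: ler_sum => e _; exact: P3_feasible_gap_ge q_feas gamma_ge0 (W_dom _ _).
have gamma_q_ii_le : gamma * q i i <= gamma.
  by rewrite ler_piMr // (P3_feasible_le1 q_feas).
have gamma_q_ij_ge0 : 0 <= gamma * q i j by rewrite mulr_ge0 // ltW.
have r_size_le : (size r)%:R <= n.-1%:R :> R.
  by rewrite ler_nat -ltnS (ltn_predK r_size).
have eps_term : (size r)%:R * eps <= n.-1%:R * eps by rewrite ler_wpM2r.
have gamma_term : ((size r)%:R + 1) * gamma <= n%:R * gamma.
  by rewrite ler_wpM2r // natr1 ler_nat.
lra.
Qed.

Theorem mainTheorem11 (R : realType) (mk m : nat) (F : 'I_mk -> R)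
    (gamma eps1 eps2 : R) (W q : 'I_mk -> 'I_mk -> R) :
  (mk <= m)%N ->
  (forall i, 0 < F i) -> \sum_(i < mk) F i = 1 ->
  0 < gamma ->
  (forall i j, -1 <= W i j <= 1) ->
  0 <= eps1 -> 0 <= eps2 ->
  (forall i j, Num.max (W i j - eps1) (- eps2) <= W i i) ->
  P3_optimal gamma F W q ->
  forall i j, 0 < q i j ->
    W i i - m%:R * eps1 - Num.sqrt 2 * m%:R * gamma <= W i j.
Proof.
move=> mk_le_m F_gt0 _ gamma_gt0 _ eps1_ge0 _ W_diag q_opt i j q_ij_gt0.
have W_dom a b : W a b - eps1 <= W a a.
  by move: (W_diag a b); rewrite ge_max => /andP[].
have := P3_optimal_diag_gap F_gt0 (ltW gamma_gt0) eps1_ge0 W_dom q_opt q_ij_gt0.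
have mk_pred_le : mk.-1%:R <= m%:R :> R by rewrite ler_nat (leq_trans (leq_pred mk)).
have eps1_term : mk.-1%:R * eps1 <= m%:R * eps1 by rewrite ler_wpM2r.
have sqrt2_ge1 : 1 <= Num.sqrt 2 :> R by rewrite -[leLHS]sqrtr1 ler_sqrt ?ler1n.
have gamma_term : mk%:R * gamma <= Num.sqrt 2 * m%:R * gamma.
  by rewrite ler_wpM2r ?(ltW gamma_gt0) // (@le_trans _ _ m%:R) ?ler_nat ?ler_peMl.
lra.
Qed.
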